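(* The following are theorems of $\mathbf{LEL}$ (for all $a\in\mathbf{A}$, variables $x,y$, $p\in\mathbf{P}$, formulas $\phi$, sentences $\alpha$, and strings $\vec{x}$ of variables and $\vec{a}$ of agents of equal length): (1) $[x:=a]\phi\leftrightarrow[y:=a]\phi[y/x]$, provided $y$ does not occur in $\phi$; (2) $[\vec{x}:=\vec{a}](\mathsf{K}_{\vec{x}}\alpha\to\mathsf{K}_{\vec{x}}[\vec{x}:=\vec{a}]\mathsf{K}_{\vec{x}}\alpha)$; (3) $[x:=a](\neg p_x\to\mathsf{K}_{x}[x:=a]\neg p_x)$.
   Context: Fix a nonempty finite set $\mathbf{A}$ of agents, a countable set $\mathbf{X}$ of variables disjoint from $\mathbf{A}$, and a countable set $\mathbf{P}$ of predicate letters. Formulas and free variables are defined simultaneously: $\phi ::= p_x \mid \top \mid \neg\phi \mid (\phi\wedge\phi) \mid [x:=a]\phi \mid \mathsf{K}_X\alpha$ ($p\in\mathbf{P}$, $x\in\mathbf{X}$, $a\in\mathbf{A}$, $X\subseteq\mathbf{X}$ finite possibly empty, $\alpha$ a formula with no free variables), $FV(p_x)=\{x\}$, $FV(\top)=\emptyset$, $FV(\neg\phi)=FV(\phi)$, $FV(\phi\wedge\psi)=FV(\phi)\cup FV(\psi)$, $FV([x:=a]\phi)=FV(\phi)\setminus\{x\}$, $FV(\mathsf{K}_X\alpha)=X$. Sentences are formulas without free variables. $\bot:=\neg\top$, other Booleans as usual, $\langle x:=a\rangle\phi:=\neg[x:=a]\neg\phi$, $\widehat{\mathsf{K}}_X\alpha:=\neg\mathsf{K}_X\neg\alpha$.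 $\phi[y/x]$ denotes the result of replacing all free occurrences of $x$ in $\phi$ by $y$ (including in the index sets $X$ of subformulas $\mathsf{K}_X\alpha$); it is admissible if $x$ has no free occurrence in $\phi$ within the scope of an operator $[y:=b]$, $b\in\mathbf{A}$. For $\vec{x}=x_1,\dots,x_n$ and $\vec{a}=a_1,\dots,a_n$, $[\vec{x}:=\vec{a}]\phi$ abbreviates $[x_1:=a_1]\cdots[x_n:=a_n]\phi$ (just $\phi$ if $n=0$), $\{\vec x\}=\{x_1,\dots,x_n\}$, $\{\vec a\}=\{a_1,\dots,a_n\}$, $\mathsf{K}_{\vec{x}}\alpha:=\mathsf{K}_{\{\vec{x}\}}\alpha$, and $\mathsf{K}_x:=\mathsf{K}_{\{x\}}$. The system $\mathbf{LEL}$ has axioms: all propositional tautologies; $\mathsf{K}_X(\alpha\to\beta)\to(\mathsf{K}_X\alpha\to\mathsf{K}_X\beta)$; $\mathsf{K}_X\alpha\to\mathsf{K}_Y\alpha$ for $X\subseteq Y$; $[x:=a](\phi\to\psi)\to([x:=a]\phi\to[x:=a]\psi)$; $\langle x:=a\rangle\phi\to[x:=a]\phi$; $\phi\to[x:=a]\phi$ for $x\notin FV(\phi)$; $[y:=a]([x:=a]\phi\to\phi[y/x])$ for admissible $\phi[y/x]$; $[x:=a][y:=b]\phi\to[y:=b][x:=a]\phi$ for $x\neq y$; $\bigwedge_{a\in\mathbf{A}}[x:=a]\phi\to\phi$; $\mathsf{K}_X\alpha\to\alpha$; $[\vec{x}:=\vec{a}](\neg\mathsf{K}_{\vec{x}}\alpha\to\mathsf{K}_{\vec{x}}[\vec{x}:=\vec{a}]\neg\mathsf{K}_{\vec{x}}\alpha)$;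 $[x:=a]\mathsf{K}_{x}\langle x:=a\rangle\top$; $[x:=a](p_x\to\mathsf{K}_{x}[x:=a]p_x)$; $[\vec{x}:=\vec{a}](\bigwedge_{b\in B}[x:=b]\bot\to\mathsf{K}_{\vec{x}}\bigwedge_{b\in B}[x:=b]\bot)$ where $B=\mathbf{A}\setminus\{\vec{a}\}$. Rules: modus ponens; from $\alpha$ infer $\mathsf{K}_\emptyset\alpha$ ($\alpha$ a sentence); from $\phi$ infer $[x:=a]\phi$. (Here $\alpha,\beta$ range over sentences, $\phi,\psi$ over formulas.) *)

From HB Require Import structures.
From mathcomp Require Import all_boot.
From mathcomp Require Import finmap.

Set Implicit Arguments.
Unset Strict Implicit.
Unset Printing Implicit Defensive.

Local Open Scope fset_scope.

Section LEL.
Variables (A : finType) (X : countType) (P : countType).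

(* Raw syntax.  K Z a is K_S a; well-formedness (a must be a sentence)
   is imposed by [wf] below. *)
Inductive form : Type :=
  | Pred   of P & X
  | Top
  | Neg    of form
  | And    of form & form
  | Assign of X & A & form
  | Kn     of {fset X} & form.

Fixpoint FV (f : form) : {fset X} :=
  match f with
  | Pred _ x => [fset x]
  | Top => fset0
  | Neg g => FV g
  | And g h => FV g `|` FV h
  | Assign x _ g => FV g `\ x
  | Kn Z _ => Z
  end.

Fixpoint wf (f : form) : bool :=
  match f with
  | Pred _ _ | Top => true
  | Neg g => wf g
  | And g h => wf g && wf h
  | Assign _ _ g => wf g
  | Kn _ g => wf g && (FV g == fset0)
  end.

Definition sentence (f : form) : bool := wf f && (FV f == fset0).

Fixpoint occurs (y : X) (f : form) : bool :=
  match f with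
  | Pred _ x => x == y
  | Top => false
  | Neg g => occurs y g
  | And g h => occurs y g || occurs y h
  | Assign z _ g => (z == y) || occurs y g
  | Kn Z g => (y \in Z) || occurs y g
  end.

Definition subst_set (y x : X) (Z : {fset X}) : {fset X} :=
  if x \in Z then (Z `\ x) `|` [fset y] else Z.

Fixpoint subst (y x : X) (f : form) : form :=
  match f with
  | Pred p z => Pred p (if z == x then y else z)
  | Top => Top
  | Neg g => Neg (subst y x g)
  | And g h => And (subst y x g) (subst y x h)
  | Assign z a g => if z == x then Assign z a g else Assign z a (subst y x g)
  | Kn Z g => Kn (subst_set y x Z) g
  end.

(* f[y/x] is admissible: x has no free occurrence in f within the scope
   of an operator [y := b] *)
Fixpoint admissible (y x : X) (f : form) : bool :=
  match f with
  | Pred _ _ | Top | Kn _ _ => true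
  | Neg g => admissible y x g
  | And g h => admissible y x g && admissible y x h
  | Assign z _ g =>
      if z == x then true
      else if z == y then x \notin FV g
      else admissible y x g
  end.

Definition Bot := Neg Top.
Definition Imp (f g : form) := Neg (And f (Neg g)).
Definition Iff (f g : form) := And (Imp f g) (Imp g f).
Definition Dia (x : X) (a : A) (f : form) := Neg (Assign x a (Neg f)).
Definition bigAnd (fs : seq form) := foldr And Top fs.

Definition massign (xs : seq X) (ags : seq A) (f : form) : form :=
  foldr (fun p g => Assign p.1 p.2 g) f (zip xs ags).
Definition Kv (xs : seq X) (f : form) := Kn [fset x | x in xs] f.
Definition K1 (x : X) (f : form) := Kn [fset x] f.

(* propositional tautologies: true under every assignment of truth values
   to the maximal non-Boolean subformulas *)
Fixpoint peval (v : form -> bool) (f : form) : bool :=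
  match f with
  | Top => true
  | Neg g => ~~ peval v g
  | And g h => peval v g && peval v h
  | _ => v f
  end.
Definition tautology (f : form) : Prop := forall v, peval v f.

Inductive axiom : form -> Prop :=
  | ax_taut f : tautology f -> axiom f
  | ax_K Z al be : sentence al -> sentence be ->
      axiom (Imp (Kn Z (Imp al be)) (Imp (Kn Z al) (Kn Z be)))
  | ax_mono Z Z2 al : sentence al -> Z `<=` Z2 ->
      axiom (Imp (Kn Z al) (Kn Z2 al))
  | ax_Kassign x a f g :
      axiom (Imp (Assign x a (Imp f g)) (Imp (Assign x a f) (Assign x a g)))
  | ax_func x a f : axiom (Imp (Dia x a f) (Assign x a f))
  | ax_vac x a f : x \notin FV f -> axiom (Imp f (Assign x a f))
  | ax_subst x y a f : admissible y x f ->
      axiom (Assign y a (Imp (Assign x a f) (subst y x f)))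
  | ax_comm x y a b f : x != y ->
      axiom (Imp (Assign x a (Assign y b f)) (Assign y b (Assign x a f)))
  | ax_cover x f :
      axiom (Imp (bigAnd [seq Assign x a f | a <- enum A]) f)
  | ax_T Z al : sentence al -> axiom (Imp (Kn Z al) al)
  | ax_negintro xs ags al : size xs = size ags -> sentence al ->
      axiom (massign xs ags
               (Imp (Neg (Kv xs al))
                    (Kv xs (massign xs ags (Neg (Kv xs al))))))
  | ax_selfid x a : axiom (Assign x a (K1 x (Dia x a Top)))
  | ax_posintro x a p :
      axiom (Assign x a (Imp (Pred p x) (K1 x (Assign x a (Pred p x)))))
  | ax_absent xs ags x : size xs = size ags ->
      let B := [seq b <- enum A | b \notin ags] in
      let F := bigAnd [seq Assign x b Bot | b <- B] in
      axiom (massign xs ags (Imp F (Kv xs F))).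

Inductive derivable : form -> Prop :=
  | d_ax f : axiom f -> wf f -> derivable f
  | d_mp f g : derivable (Imp f g) -> derivable f -> derivable g
  | d_nec al : sentence al -> derivable al -> derivable (Kn fset0 al)
  | d_gen x a f : derivable f -> derivable (Assign x a f).

End LEL.

Arguments Pred {A X P}.
Arguments Top {A X P}.
Arguments Bot {A X P}.

(* Iterated assignments [l] are normal modal operators, so every
   tautology can be used under them.  For (1), the substitution axiom gives
   [y:=a]([x:=a]phi -> phi[y/x]), and [x:=a]phi -> [y:=a][x:=a]phi holds by
   vacuity; the converse is the same argument for phi[y/x], since the renaming
   can be undone when y is fresh.  Parts (2) and (3) are instances of one
   transfer principle: if beta satisfies introspection
   [l](beta -> K[l]beta), then so does ~beta.  Indeed [l]([l]beta -> beta)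
   and the T axiom give [l](~beta -> ~K[l]beta); negative introspection turns
   this into K[l]~K[l]beta, and [l]~K[l]beta -> [l]~beta follows from the
   hypothesis by contraposition.  (3) is the transfer of the positive
   introspection axiom for p_x, and (2) the transfer of negative introspection
   for ~K alpha. *)

From Pilot Require Import Defs.
From mathcomp Require Import all_boot finmap.

Set Implicit Arguments.
Unset Strict Implicit.
Unset Printing Implicit Defensive.

Local Open Scope fset_scope.

Section Substitution.
Variables (A : finType) (X : countType) (P : countType).
Implicit Types (phi : form A X P) (x y : X).

Lemma subst_set_id x Z : subst_set x x Z = Z.
Proof.
rewrite /subst_set; case: ifP => // Zx; apply/fsetP => z.
by rewrite in_fsetU in_fsetD1 in_fset1; case: (z =P x) => [->|] //=; rewrite orbF.
Qed.

Lemma subst_id x phi : subst x x phi = phi.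
Proof.
elim: phi => [p z| |g IH|g IHg h IHh|z b g IH|Z g IH] //=.
- by case: eqP => [->|].
- by rewrite IH.
- by rewrite IHg IHh.
- by case: eqP => // _; rewrite IH.
- by rewrite subst_set_id.
Qed.

Lemma admissible_id x phi : admissible x x phi.
Proof.
elim: phi => [p z| |g IH|g IHg h IHh|z b g IH|Z g IH] //=.
- by rewrite IHg IHh.
- by case: eqP.
Qed.

Lemma wf_subst x y phi : wf phi -> wf (subst y x phi).
Proof.
elim: phi => [p z| |g IH|g IHg h IHh|z b g IH|Z g IH] //=.
- by case/andP => /IHg -> /IHh ->.
- by case: ifP => //= _; apply: IH.
Qed.

Lemma nocc_notin_FV y phi : ~~ occurs y phi -> y \notin FV phi.
Proof.
elim: phi => [p z| |g IH|g IHg h IHh|z b g IH|Z g IH] //=.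
- by rewrite inE eq_sym.
- by rewrite negb_or in_fsetU => /andP[/IHg/negbTE -> /IHh/negbTE ->].
- by rewrite negb_or in_fsetD1 => /andP[_ /IH/negbTE ->]; rewrite andbF.
- by rewrite negb_or => /andP[].
Qed.

Lemma subst_nocc x y phi : ~~ occurs y phi -> subst x y phi = phi.
Proof.
elim: phi => [p z| |g IH|g IHg h IHh|z b g IH|Z g IH] //=.
- by move/negbTE->.
- by move/IH->.
- by rewrite negb_or => /andP[/IHg -> /IHh ->].
- by rewrite negb_or => /andP[/negbTE -> /IH ->].
- by rewrite negb_or /subst_set => /andP[/negbTE -> _].
Qed.

Lemma substK x y phi : ~~ occurs y phi -> subst x y (subst y x phi) = phi.
Proof.
elim: phi => [p z| |g IH|g IHg h IHh|z b g IH|Z g IH] //=.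
- by move=> yz; case: (z =P x) => [->|_]; rewrite ?eqxx ?(negbTE yz).
- by move/IH->.
- by rewrite negb_or => /andP[/IHg -> /IHh ->].
- rewrite negb_or => /andP[/negbTE zy yg].
  by case: (z =P x) => _ /=; rewrite zy; [rewrite subst_nocc | rewrite IH].
- rewrite negb_or => /andP[yZ _]; congr Kn.
  rewrite /subst_set; case: (boolP (x \in Z)) => xZ; last by rewrite (negbTE yZ).
  rewrite in_fsetU in_fset1 eqxx orbT; apply/fsetP => w.
  rewrite !(in_fsetU, in_fsetD1, in_fset1).
  case: (w =P x) => [->|_] /=; first by rewrite xZ orbT.
  by case: (w =P y) => [->|_] /=; rewrite ?(negbTE yZ) ?orbF.
Qed.

Lemma admissible_nocc x y phi : ~~ occurs y phi -> admissible y x phi.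
Proof.
elim: phi => [p z| |g IH|g IHg h IHh|z b g IH|Z g IH] //=.
- by rewrite negb_or => /andP[/IHg -> /IHh ->].
- by rewrite negb_or => /andP[/negbTE -> /IH ->]; case: ifP.
Qed.

Lemma admissible_subst x y phi : ~~ occurs y phi -> admissible x y (subst y x phi).
Proof.
elim: phi => [p z| |g IH|g IHg h IHh|z b g IH|Z g IH] //=.
- by rewrite negb_or => /andP[/IHg -> /IHh ->].
- rewrite negb_or => /andP[/negbTE zy yg]; case: (z =P x) => [zx|/eqP/negbTE zx] /=.
    by rewrite zy zx eqxx nocc_notin_FV.
  by rewrite zy zx IH.
Qed.

Lemma notin_FV_subst x y phi : x != y -> x \notin FV (subst y x phi).
Proof.
move=> xy; elim: phi => [p z| |g IH|g IHg h IHh|z b g IH|Z g IH] //=.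
- by rewrite in_fset1; case: (z =P x) => // /eqP zx; rewrite eq_sym.
- by rewrite in_fsetU negb_or IHg IHh.
- by case: (z =P x) => [->|_] /=; rewrite in_fsetD1 ?eqxx // (negbTE IH) andbF.
- rewrite /subst_set; case: ifP => [_|-> //].
  by rewrite in_fsetU in_fsetD1 eqxx in_fset1.
Qed.

End Substitution.

Section Derivations.
Variables (A : finType) (X : countType) (P : countType).
Local Notation form := (Defs.form A X P).
Implicit Types (f g h phi : form) (l : seq (X * A)).

Definition asg l f : form := foldr (fun p g => Assign p.1 p.2 g) f l.

Lemma massignE xs ags f : massign xs ags f = asg (zip xs ags) f.
Proof. by []. Qed.

Lemma wf_Imp f g : wf (Imp f g) = wf f && wf g.
Proof. by []. Qed.

Lemma wf_asg l f : wf (asg l f) = wf f.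
Proof. by elim: l => //= [[x a] l]. Qed.

Lemma wf_Kn Z f : wf (Kn Z f) = sentence f.
Proof. by []. Qed.

Lemma sentence_wf f : sentence f -> wf f.
Proof. by case/andP. Qed.

Lemma derivable_wf f : derivable f -> wf f.
Proof. by elim=> {f} // f g _; rewrite wf_Imp => /andP[]. Qed.

Ltac taut := move=> v; rewrite /Imp /Iff /=;
  repeat match goal with |- context [peval ?w ?f] => is_var f; case: (peval w f) end.

Lemma taut_id f : tautology (Imp f f). Proof. by taut. Qed.
Lemma taut_trans f g h : tautology (Imp (Imp f g) (Imp (Imp g h) (Imp f h))).
Proof. by taut. Qed.
Lemma taut_contra f g : tautology (Imp (Imp f g) (Imp (Neg g) (Neg f))).
Proof. by taut. Qed.
Lemma taut_cases f g : tautology (Imp (Imp f g) (Imp (Imp (Neg f) g) g)).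
Proof. by taut. Qed.
Lemma taut_weaken f g : tautology (Imp g (Imp f g)). Proof. by taut. Qed.
Lemma taut_absurd f g : tautology (Imp (Neg f) (Imp f g)). Proof. by taut. Qed.
Lemma taut_notNK f : tautology (Imp f (Neg (Neg f))). Proof. by taut. Qed.
Lemma taut_notNE f : tautology (Imp (Neg (Neg f)) f). Proof. by taut. Qed.
Lemma taut_Iff f g : tautology (Imp (Imp f g) (Imp (Imp g f) (Iff f g))).
Proof. by taut. Qed.

Lemma derivable_taut f : tautology f -> wf f -> derivable f.
Proof. by move=> tf wf_f; apply: d_ax wf_f; apply: ax_taut. Qed.

Lemma derivable_taut2 f1 f2 g : tautology (Imp f1 (Imp f2 g)) -> wf g ->
  derivable f1 -> derivable f2 -> derivable g.
Proof.
move=> tf wg d1 d2; apply: (d_mp (d_mp _ d1) d2).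
apply: derivable_taut tf _; by rewrite !wf_Imp (derivable_wf d1) (derivable_wf d2) wg.
Qed.

Lemma imp_trans f g h : derivable (Imp f g) -> derivable (Imp g h) -> derivable (Imp f h).
Proof.
move=> d1 d2; apply: (derivable_taut2 (taut_trans f g h) _ d1 d2).
by move: (derivable_wf d1) (derivable_wf d2); rewrite !wf_Imp => /andP[-> _] /andP[].
Qed.

Lemma asg_gen l f : derivable f -> derivable (asg l f).
Proof. by elim: l => //= [[x a] l IH] /IH; apply: d_gen. Qed.

Lemma asg_K l f g : wf f -> wf g ->
  derivable (Imp (asg l (Imp f g)) (Imp (asg l f) (asg l g))).
Proof.
move=> wf_f wg; elim: l => [|[x a] l IH] /=.
  by apply: derivable_taut (taut_id _) _; rewrite !wf_Imp wf_f wg.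
have wfs : [&& wf (asg l (Imp f g)), wf (asg l f) & wf (asg l g)].
  by rewrite !wf_asg wf_Imp wf_f wg.
case/and3P: wfs => w1 w2 w3.
apply: imp_trans (_ : derivable (Imp _ (Assign x a (Imp (asg l f) (asg l g))))) _.
  apply: d_mp (d_gen x a IH); apply: d_ax; first exact: ax_Kassign.
  by rewrite /= w1 w2 w3.
by apply: d_ax; [exact: ax_Kassign | rewrite /= w2 w3].
Qed.

Lemma asg_mp l f g :
  derivable (asg l (Imp f g)) -> derivable (asg l f) -> derivable (asg l g).
Proof.
move=> d1; move: (derivable_wf d1); rewrite wf_asg wf_Imp => /andP[wf_f wg].
exact: d_mp (d_mp (asg_K l wf_f wg) d1).
Qed.

Lemma asg_distr l f g :
  derivable (asg l (Imp f g)) -> derivable (Imp (asg l f) (asg l g)).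
Proof.
move=> d; move: (derivable_wf d); rewrite wf_asg wf_Imp => /andP[wf_f wg].
exact: d_mp (asg_K l wf_f wg) d.
Qed.

Lemma asg_mono l f g : derivable (Imp f g) -> derivable (Imp (asg l f) (asg l g)).
Proof.
move=> d; move: (derivable_wf d); rewrite wf_Imp => /andP[wf_f wg].
exact: d_mp (asg_K l wf_f wg) (asg_gen l d).
Qed.

Lemma asg_taut1 l f g : tautology (Imp f g) -> wf g ->
  derivable (asg l f) -> derivable (asg l g).
Proof.
move=> tf wg d; apply: (asg_mp (asg_gen l (derivable_taut tf _)) d).
by rewrite wf_Imp wg -(wf_asg l) (derivable_wf d).
Qed.

Lemma asg_taut2 l f1 f2 g : tautology (Imp f1 (Imp f2 g)) -> wf g ->
  derivable (asg l f1) -> derivable (asg l f2) -> derivable (asg l g).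
Proof.
move=> tf wg d1 d2; apply: (asg_mp (asg_mp (asg_gen l (derivable_taut tf _)) d1) d2).
by rewrite !wf_Imp -(wf_asg l f1) -(wf_asg l f2) (derivable_wf d1) (derivable_wf d2) wg.
Qed.

Lemma asg_imp_trans l f g h :
  derivable (asg l (Imp f g)) -> derivable (asg l (Imp g h)) ->
  derivable (asg l (Imp f h)).
Proof.
move=> d1 d2; apply: (asg_taut2 (taut_trans f g h) _ d1 d2).
move: (derivable_wf d1) (derivable_wf d2); rewrite !wf_asg !wf_Imp.
by case/andP=> -> _ /andP[].
Qed.

Lemma asg_contra l f g :
  derivable (asg l (Imp f g)) -> derivable (asg l (Imp (Neg g) (Neg f))).
Proof.
move=> d; apply: (asg_taut1 (taut_contra f g) _ d).
by move: (derivable_wf d); rewrite wf_asg wf_Imp andbC.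
Qed.

Lemma notin_FV_asg l f z : z \in unzip1 l -> z \notin FV (asg l f).
Proof.
elim: l => //= [[x a] l IH]; rewrite inE in_fsetD1 => /orP[/eqP->|/IH/negbTE->].
  by rewrite eqxx.
by rewrite andbF.
Qed.

Lemma FV_asg_sub l f : FV (asg l f) `<=` FV f.
Proof. by elim: l => //= [[x a] l IH]; apply: fsubset_trans (fsubD1set _ _) IH. Qed.

Lemma sentence_asg_zip xs ags f : size xs = size ags -> wf f ->
  FV f `<=` [fset z | z in xs] -> sentence (asg (zip xs ags) f).
Proof.
move=> sz wf_f /fsubsetP FVf; rewrite /sentence wf_asg wf_f /=.
apply/eqP/fsetP => z; rewrite inE; apply/negP => z_asg.
have /FVf : z \in FV f by apply: (fsubsetP (FV_asg_sub _ _)) z_asg.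
rewrite inE -(unzip1_zip (eq_leq sz)) => /(notin_FV_asg f).
by rewrite z_asg.
Qed.

Lemma sentence_Imp f g : sentence f -> sentence g -> sentence (Imp f g).
Proof. by rewrite /sentence /= => /andP[-> /eqP->] /andP[-> /eqP->]; rewrite fsetU0. Qed.

Lemma asg_vacuous l f : wf f -> {in unzip1 l, forall z, z \notin FV f} ->
  derivable (Imp f (asg l f)).
Proof.
move=> wf_f; elim: l => [|[y b] l IH] /= l_f.
  by apply: derivable_taut (taut_id f) _; rewrite wf_Imp wf_f.
apply: imp_trans (_ : derivable (Imp f (Assign y b f))) _.
  by apply: d_ax; [apply: ax_vac; apply: l_f; rewrite inE eqxx | rewrite /= wf_f].
apply: (asg_mono [:: (y, b)]); apply: IH => z z_l.
by apply: l_f; rewrite inE z_l orbT.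
Qed.

Lemma assign_self x a f : wf f -> derivable (Assign x a (Imp (Assign x a f) f)).
Proof.
move=> wf_f; have := d_ax (ax_subst a (admissible_id x f)).
by rewrite subst_id; apply; rewrite /= wf_f.
Qed.

Lemma asg_idem l f : wf f -> derivable (asg l (Imp (asg l f) f)).
Proof.
move=> wf_f; case: l => [|[x a] l] /=.
  by apply: derivable_taut (taut_id f) _; rewrite wf_Imp wf_f.
set B := Assign x a (asg l f).
have wM : wf (asg l f) by rewrite wf_asg.
(* B binds every variable of l, so its truth value survives the assignments l. *)
have B_stable : derivable (Imp (Neg B) (asg l (Neg B))).
  apply: asg_vacuous => // z z_l.
  by apply: (notin_FV_asg (l := (x, a) :: l)); rewrite inE z_l orbT.
have weaken : derivable (Imp (asg l f) (asg l (Imp B f))).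
  by apply: asg_mono; apply: derivable_taut (taut_weaken B f) _; rewrite /= wf_asg wf_f.
have absurd : derivable (Imp (asg l (Neg B)) (asg l (Imp B f))).
  by apply: asg_mono; apply: derivable_taut (taut_absurd B f) _; rewrite /= wf_asg wf_f.
have case_B := asg_imp_trans (l := [:: (x, a)]) (assign_self x a wM) (d_gen x a weaken).
have case_notB := asg_imp_trans (l := [:: (x, a)]) (d_gen x a B_stable) (d_gen x a absurd).
apply: (asg_taut2 (taut_cases B _) _ case_B case_notB).
by rewrite wf_asg /= wf_asg wf_f.
Qed.

Lemma K_mono Z f g : sentence f -> sentence g ->
  derivable (Imp f g) -> derivable (Imp (Kn Z f) (Kn Z g)).
Proof.
move=> sf sg d; have sfg := sentence_Imp sf sg.
have K0 : derivable (Kn fset0 (Imp f g)) by exact: d_nec.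
have KZ : derivable (Kn Z (Imp f g)).
  apply: d_mp K0; apply: d_ax; first exact: ax_mono (fsub0set Z).
  by rewrite wf_Imp; apply/andP.
apply: d_mp KZ; apply: d_ax; first exact: ax_K.
by rewrite !wf_Imp; apply/and3P.
Qed.

Lemma introspection_Neg (xs : seq X) (ags : seq A) (b : form) :
  size xs = size ags -> wf b -> FV b `<=` [fset z | z in xs] ->
  derivable (massign xs ags (Imp b (Kv xs (massign xs ags b)))) ->
  derivable (massign xs ags (Imp (Neg b) (Kv xs (massign xs ags (Neg b))))).
Proof.
move=> sz wb FVb intro_b; rewrite !massignE /Kv in intro_b *.
set l := zip xs ags in intro_b *; set S := [fset z | z in xs] in FVb intro_b *.
set lb := asg l b; set Nlb := asg l (Neg (Kn S lb)).
have s_lb : sentence lb by exact: sentence_asg_zip.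
have s_lNb : sentence (asg l (Neg b)) by exact: sentence_asg_zip.
have s_Nlb : sentence Nlb by apply: sentence_asg_zip => //; apply: fsubset_refl.
have nb_nlb : derivable (asg l (Imp (Neg b) (Neg lb))) by exact/asg_contra/asg_idem.
have nlb_nK : derivable (asg l (Imp (Neg lb) (Neg (Kn S lb)))).
  have T_lb : derivable (Imp (Kn S lb) lb).
    by apply: d_ax; [exact: ax_T | rewrite wf_Imp wf_Kn s_lb sentence_wf].
  exact: asg_gen (asg_contra (l := [::]) T_lb).
have nK_KN : derivable (asg l (Imp (Neg (Kn S lb)) (Kn S Nlb))).
  by apply: d_ax; [exact: ax_negintro | rewrite wf_asg wf_Imp; apply/andP].
have KN_Knb : derivable (asg l (Imp (Kn S Nlb) (Kn S (asg l (Neg b))))).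
  by apply/asg_gen/K_mono/asg_distr/asg_contra.
exact: asg_imp_trans nb_nlb (asg_imp_trans nlb_nK (asg_imp_trans nK_KN KN_Knb)).
Qed.

Lemma Kv_introspection (xs : seq X) (ags : seq A) (al : form) :
  size xs = size ags -> sentence al ->
  derivable (massign xs ags (Imp (Kv xs al) (Kv xs (massign xs ags (Kv xs al))))).
Proof.
move=> sz s_al; set Kal := Kv xs al.
have wKal : wf Kal by exact: s_al.
have FV_Kal : FV Kal `<=` [fset z | z in xs] by exact: fsubset_refl.
have s_Kal : sentence (massign xs ags Kal) by exact: sentence_asg_zip.
have s_NKal : sentence (massign xs ags (Neg Kal)) by exact: sentence_asg_zip.
have s_NNKal : sentence (massign xs ags (Neg (Neg Kal))) by exact: sentence_asg_zip.
have negintro : derivable (massign xs ags (Imp (Neg Kal) (Kv xs (massign xs ags (Neg Kal))))).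
  apply: d_ax; first exact: ax_negintro.
  by rewrite massignE wf_asg wf_Imp; apply/andP.
have := introspection_Neg (b := Neg Kal) sz wKal FV_Kal negintro.
rewrite !massignE in s_Kal s_NNKal * => intro_NKal.
apply: asg_imp_trans (asg_imp_trans intro_NKal _).
  by apply: asg_gen; apply: derivable_taut (taut_notNK _) _; rewrite wf_Imp; apply/andP.
apply/asg_gen/K_mono/asg_mono => //.
by apply: derivable_taut (taut_notNE _) _; rewrite wf_Imp; apply/andP.
Qed.

Lemma Pred_neg_introspection (x : X) (a : A) (p : P) :
  derivable (Assign x a (Imp (Neg (Pred p x)) (K1 x (Assign x a (Neg (Pred p x)))))).
Proof.
have K1E f : K1 x f = Kv [:: x] f.
  by rewrite /K1 /Kv; congr Kn; apply/fsetP => z; rewrite !inE orbF.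
have FV_px : FV (Pred p x) `<=` [fset z | z in [:: x]].
  by rewrite /= fsub1set !inE eqxx.
have s_px : sentence (Assign x a (Pred p x)).
  exact: (sentence_asg_zip (xs := [:: x]) (ags := [:: a])).
rewrite K1E; apply: (introspection_Neg (xs := [:: x]) (ags := [:: a])) => //.
by rewrite -K1E; apply: d_ax; [exact: ax_posintro | exact: s_px].
Qed.

Lemma assign_rename_imp (x y : X) (a : A) phi :
  wf phi -> admissible y x phi -> y \notin FV (Assign x a phi) ->
  derivable (Imp (Assign x a phi) (Assign y a (subst y x phi))).
Proof.
move=> wphi adm yFV; have wphi' := wf_subst x y wphi.
apply: imp_trans (d_ax (ax_vac a yFV) _) _; first by rewrite /= wphi.
apply: (asg_distr (l := [:: (y, a)])).
by apply: d_ax; [exact: ax_subst | rewrite /= wphi wphi'].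
Qed.

Lemma assign_rename (x y : X) (a : A) phi : wf phi -> ~~ occurs y phi ->
  derivable (Iff (Assign x a phi) (Assign y a (subst y x phi))).
Proof.
move=> wphi y_phi; have wphi' := wf_subst x y wphi.
have y_FV : y \notin FV (Assign x a phi).
  by rewrite /= in_fsetD1 (negbTE (nocc_notin_FV y_phi)) andbF.
have x_FV : x \notin FV (Assign y a (subst y x phi)).
  by rewrite /= in_fsetD1; case: (x =P y) => //= /eqP /notin_FV_subst ->.
have to := assign_rename_imp wphi (admissible_nocc x y_phi) y_FV.
have from := assign_rename_imp wphi' (admissible_subst x y_phi) x_FV.
rewrite substK // in from.
by apply: derivable_taut2 (taut_Iff _ _) _ to from; rewrite /= wphi wphi'.
Qed.

End Derivations.

Theorem proposition5 (A : finType) (X : countType) (P : countType) :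
  0 < #|A| ->
  (* (1) *)
  (forall (x y : X) (a : A) (phi : form A X P),
      wf phi -> ~~ occurs y phi ->
      derivable (Iff (Assign x a phi) (Assign y a (subst y x phi)))) /\
  (* (2) *)
  (forall (xs : seq X) (ags : seq A) (al : form A X P),
      size xs = size ags -> sentence al ->
      derivable (massign xs ags
                   (Imp (Kv xs al) (Kv xs (massign xs ags (Kv xs al)))))) /\
  (* (3) *)
  (forall (x : X) (a : A) (p : P),
      derivable (Assign x a
                   (Imp (Neg (Pred p x)) (K1 x (Assign x a (Neg (Pred p x))))) : form A X P)).
Proof.
(* None of the three derivations uses the covering axiom, so A may be empty. *)
move=> _; split; first exact: assign_rename.
by split; [exact: Kv_introspection | exact: Pred_neg_introspection].
Qed.
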